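(* Let $n\ge 3$ and let $\mathcal{M}$ be a uniform oriented matroid of rank $3$ on $n$ elements. Then $\operatorname{diam}(G^*(\mathcal{M}))=n-1$ $(=n-r+2)$.
   Context: Sign vectors: for a finite set $E$ and $X\in\{+,-,0\}^E$, write $X^+=\{e:X_e=+\}$, $X^-=\{e:X_e=-\}$, $X^0=\{e:X_e=0\}$, $\operatorname{supp}(X)=X^+\cup X^-$, and $-X$ for the componentwise negation. For sign vectors $X,Y$, the separating set is $S(X,Y)=(X^+\cap Y^-)\cup(X^-\cap Y^+)$, and the composition $X\circ Y$ is given by $(X\circ Y)_e=X_e$ if $X_e\neq 0$ and $(X\circ Y)_e=Y_e$ otherwise. An oriented matroid $\mathcal{M}=(E,\mathcal{C}^* )$ is a finite set $E$ together with a set $\mathcal{C}^*\subseteq\{+,-,0\}^E$ of (signed) cocircuits satisfying: (CC0) $\mathbf{0}\notin\mathcal{C}^*$; (CC1) $X\in\mathcal{C}^*\Rightarrow -X\in\mathcal{C}^*$; (CC2) if $X,Y\in\mathcal{C}^*$ and $\operatorname{supp}(X)\subseteq\operatorname{supp}(Y)$ then $X=\pm Y$; (CC3) if $X,Y\in\mathcal{C}^*$, $X\neq -Y$ and $e\in S(X,Y)$, then there is $Z\in\mathcal{C}^*$ with $Z^+\subseteq (X^+\cup Y^+)\setminus\{e\}$ and $Z^-\subseteq (X^-\cup Y^-)\setminus\{e\}$. The covectors of $\mathcal{M}$ are $\mathbf{0}$ together with all compositions $X^1\circ\cdots\circ X^k$ ($k\ge 1$) of cocircuits, partially ordered componentwise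 by $0<+$ and $0<-$ ($+,-$ incomparable). The rank $r$ of $\mathcal{M}$ is the largest $k$ such that there is a chain $\mathbf{0}=V_0<V_1<\cdots<V_k$ of covectors. $\mathcal{M}$ is uniform if $|X^0|=r-1$ for every cocircuit $X$. The cocircuit graph $G^*(\mathcal{M})$ has the cocircuits as vertices, with distinct cocircuits $X,Y$ adjacent iff $|X^0\cap Y^0|\ge r-2$ and $S(X,Y)=\emptyset$. $\operatorname{diam}(G^*(\mathcal{M}))$ is the maximum graph distance between two cocircuits. *)

From mathcomp Require Import all_boot.
Set Implicit Arguments. Unset Strict Implicit. Unset Printing Implicit Defensive.

(* Signs are encoded as option bool: None = 0, Some true = +, Some false = -. *)
Notation sign := (option bool).
Notation svec E := {ffun E -> sign}.

Section SignVectors.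
Variable E : finType.

Definition sv0 : svec E := [ffun _ => None].
Definition zeros (X : svec E) : {set E} := [set e | X e == None].
Definition supp (X : svec E) : {set E} := [set e | X e != None].
Definition pos (X : svec E) : {set E} := [set e | X e == Some true].
Definition neg (X : svec E) : {set E} := [set e | X e == Some false].
Definition negsv (X : svec E) : svec E := [ffun e => omap negb (X e)].
Definition sep (X Y : svec E) : {set E} :=
  (pos X :&: neg Y) :|: (neg X :&: pos Y).
Definition comp (X Y : svec E) : svec E :=
  [ffun e => if X e is Some b then Some b else Y e].

(* Cocircuit axioms (CC0)-(CC3). *)
Definition oriented_matroid (C : {set svec E}) : Prop :=
  [/\ sv0 \notin C,
      (forall X, X \in C -> negsv X \in C),
      (forall X Y, X \in C -> Y \in C -> supp X \subset supp Y ->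
         X = Y \/ X = negsv Y)
    & (forall X Y e, X \in C -> Y \in C -> X <> negsv Y -> e \in sep X Y ->
         exists2 Z, Z \in C &
           pos Z \subset (pos X :|: pos Y) :\ e /\
           neg Z \subset (neg X :|: neg Y) :\ e)].

Definition covector (C : {set svec E}) (V : svec E) : Prop :=
  V = sv0 \/
  exists s : seq (svec E),
    [/\ s != [::], all (fun X => X \in C) s & foldr comp sv0 s = V].

Definition sv_le (X Y : svec E) : bool := [forall e, (X e == None) || (X e == Y e)].
Definition sv_lt (X Y : svec E) : bool := (X != Y) && sv_le X Y.

Definition has_chain (C : {set svec E}) (k : nat) : Prop :=
  exists V : nat -> svec E,
    [/\ V 0 = sv0,
        (forall i, i <= k -> covector C (V i))
      & (forall i, i < k -> sv_lt (V i) (V i.+1))].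

Definition is_rank (C : {set svec E}) (r : nat) : Prop :=
  has_chain C r /\ (forall k, has_chain C k -> k <= r).

Definition uniform (C : {set svec E}) (r : nat) : Prop :=
  forall X, X \in C -> #|zeros X| = r - 1.

Definition cocirc_adj (C : {set svec E}) (r : nat) (X Y : svec E) : bool :=
  [&& X \in C, Y \in C, X != Y, r - 2 <= #|zeros X :&: zeros Y|
    & sep X Y == set0].

Definition walk (C : {set svec E}) (r : nat) (X Y : svec E) (k : nat) : Prop :=
  exists p : seq (svec E),
    [/\ size p = k, path (cocirc_adj C r) X p & last X p = Y].

Definition cocirc_diam (C : {set svec E}) (r : nat) (d : nat) : Prop :=
  (forall X Y, X \in C -> Y \in C -> exists2 k, k <= d & walk C r X Y k) /\
  (exists X Y, [/\ X \in C, Y \in C & forall k, k < d -> ~ walk C r X Y k]).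

End SignVectors.

From Pilot Require Import Defs.
From mathcomp Require Import all_boot zify.
Set Implicit Arguments. Unset Strict Implicit. Unset Printing Implicit Defensive.

(* Adjacent cocircuits are not separated by any element, so
   along a walk an element can only change sign by passing through a
   cocircuit vanishing on it; and adjacent cocircuits share a zero, so each
   step meets at most one new zero.  A walk from X to -X must therefore meet
   the n - 2 elements of the support of X before its last step: it has at
   least n - 1 steps (this part holds for uniform matroids of any rank r).

   Cocircuits sharing a zero a lie on the "line" of a:
   eliminating a separating element between them gives a cocircuit on the
   same line that splits their separation set, so by induction they are
   joined by a walk of length at most |sep X Y| + 1 <= n - 2.  Rank 3 forces
   every pair of elements to be the zero set of a cocircuit; other pairs X, Y
   are then joined through a pivot V meeting the zeros of both, and one of
   V, -V gives a walk of length at most n - 1.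
   The main theorem combines the two bounds, using -X as the far vertex. *)

Section CocircuitGraphs.
Variable E : finType.
Implicit Types (X Y Z V W : svec E) (e : E).

Lemma sepP X Y e :
  (e \in sep X Y) = [&& X e != None, Y e != None & X e != Y e].
Proof. by rewrite !inE; case: (X e) => [[]|]; case: (Y e) => [[]|]. Qed.

Lemma sep_sym X Y : sep X Y = sep Y X.
Proof.
by apply/setP => e; rewrite !sepP; case: (X e) => [[]|]; case: (Y e) => [[]|].
Qed.

Lemma negsvE X e : negsv X e = omap negb (X e).
Proof. by rewrite ffunE. Qed.

Lemma zeros_negsv X : zeros (negsv X) = zeros X.
Proof. by apply/setP => e; rewrite !inE negsvE; case: (X e). Qed.

Lemma supp_zerosC X : supp X = ~: zeros X.
Proof. by apply/setP => e; rewrite !inE. Qed.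

Lemma supp_card X : #|supp X| = #|E| - #|zeros X|.
Proof. by rewrite supp_zerosC cardsCs setCK. Qed.

Lemma nonzero_entry X : #|zeros X| < #|E| -> exists e, X e != None.
Proof.
rewrite -subn_gt0 -supp_card => /card_gt0P [e]; rewrite inE => Xe.
by exists e.
Qed.

Lemma zeros_neq_sv X Y : zeros X != zeros Y -> X != Y /\ X <> negsv Y.
Proof.
move=> neq; split; first by apply: contraNneq neq => ->.
by move=> XY; move: neq; rewrite XY zeros_negsv eqxx.
Qed.

Definition common_supp X Y : {set E} := [set e | (X e != None) && (Y e != None)].

Lemma common_suppE X Y : common_supp X Y = ~: (zeros X :|: zeros Y).
Proof. by apply/setP => e; rewrite !inE negb_or. Qed.

Lemma sep_common_supp X Y : sep X Y \subset common_supp X Y.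
Proof. by apply/subsetP => e; rewrite sepP inE => /and3P[-> ->]. Qed.

(* On the common support X agrees either with Y or with -Y. *)
Lemma sep_negsv_card X Y :
  #|sep X Y| + #|sep X (negsv Y)| = #|common_supp X Y|.
Proof.
have disj : sep X Y :&: sep X (negsv Y) = set0.
  apply/setP => e; rewrite in_setI in_set0 !sepP negsvE.
  by case: (X e) => [[]|]; case: (Y e) => [[]|].
have cover : sep X Y :|: sep X (negsv Y) = common_supp X Y.
  apply/setP => e; rewrite in_setU !sepP negsvE inE.
  by case: (X e) => [[]|]; case: (Y e) => [[]|].
by rewrite -cardsUI disj cards0 addn0 cover.
Qed.

Lemma foldr_comp_None (s : seq (svec E)) e :
  (foldr (@Defs.comp E) (sv0 E) s e == None) = all (fun X => X e == None) s.
Proof. by elim: s => [|X s IH] /=; rewrite ffunE //; case: (X e). Qed.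

Lemma sv_lt_zeros X Y : sv_lt X Y -> #|zeros Y| < #|zeros X|.
Proof.
case/andP => neqXY /forallP le; apply: proper_card; rewrite properEneq.
have sub : zeros Y \subset zeros X.
  apply/subsetP => e; rewrite !inE => /eqP Ye.
  by case/orP: (le e) => // /eqP ->; rewrite Ye.
rewrite sub andbT; apply: contra neqXY => /eqP eqZ; apply/eqP/ffunP => e.
case/orP: (le e) => [/eqP Xe|/eqP //].
have: e \in zeros Y by rewrite eqZ inE Xe.
by rewrite inE Xe => /eqP.
Qed.

Variable C : {set svec E}.

Lemma covector_nonzero V e : covector C V -> V e != None ->
  exists2 X, X \in C & X e != None /\ zeros V \subset zeros X.
Proof.
case=> [->|[s [_ sC <-]]]; first by rewrite ffunE.
rewrite foldr_comp_None => /allPn [X Xs Xe].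
exists X; first exact: (allP sC).
split=> //; apply/subsetP => g; rewrite inE foldr_comp_None => /allP.
by move=> /(_ X Xs); rewrite inE.
Qed.

Lemma walk_cat r X Y Z m1 m2 :
  walk C r X Y m1 -> walk C r Y Z m2 -> walk C r X Z (m1 + m2).
Proof.
case=> p [sp pp lp] [q [sq pq lq]]; exists (p ++ q); split.
- by rewrite size_cat sp sq.
- by rewrite cat_path pp lp pq.
- by rewrite last_cat lp.
Qed.

(* Adjacent cocircuits are not separated by any element, so along a walk an
   element keeps its sign as long as no vertex of the walk vanishes on it. *)
Lemma path_keeps_sign r e W p : path (cocirc_adj C r) W p -> W e != None ->
  all (fun V => V e != None) p -> last W p e = W e.
Proof.
elim: p W => [|V p IH] W //= /andP[/and5P[_ _ _ _ /eqP sep0] pp] We /andP[Ve pe].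
have VW : V e = W e.
  apply/eqP; apply: contraT => neq.
  have : e \in sep W V by rewrite sepP We Ve eq_sym neq.
  by rewrite sep0 inE.
by rewrite IH // VW.
Qed.

Definition zeros_along (p : seq (svec E)) : {set E} :=
  [set e | has (fun V => V e == None) p].

Section UniformWalks.
Variable r : nat.
Hypothesis unifC : uniform C r.

(* Adjacent cocircuits share r - 2 of their r - 1 zeros, so every step of a
   walk meets at most one new zero. *)
Lemma zeros_along_card W p : path (cocirc_adj C r) W p ->
  #|zeros_along p :\: zeros W| <= size p.
Proof.
elim: p W => [|V p IH] W /=.
  by move=> _; rewrite leqn0 cards_eq0; apply/eqP/setP => e; rewrite !inE andbF.
case/andP => /and5P[_ VC _ common _] /IH {}IH.
have sub : zeros_along (V :: p) :\: zeros W \subset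
           (zeros V :\: zeros W) :|: (zeros_along p :\: zeros V).
  apply/subsetP => e; rewrite !inE /=.
  by case: (W e == None); case: (V e == None).
have step : #|zeros V :\: zeros W| <= 1.
  by rewrite cardsD (unifC VC) setIC; lia.
apply: leq_trans (subset_leq_card sub) _.
by rewrite -add1n; apply: leq_trans (leq_card_setU _ _) (leq_add step IH).
Qed.

(* A walk from X to -X must pass through a zero of every element of the
   support of X, hence it has more than #|supp X| steps. *)
Lemma antipodal_walk_length X k : 0 < #|supp X| ->
  walk C r X (negsv X) k -> #|supp X| < k.
Proof.
move=> /card_gt0P [e0 e0X] [p [<- pp lp]].
have flips e : X e != None -> negsv X e != X e.
  by rewrite negsvE; case: (X e) => [[]|].
case/lastP: p pp lp => [|p Y] /=.
  by move=> _ XnX; move: (flips e0) e0X; rewrite -XnX eqxx inE => /[apply].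
rewrite last_rcons size_rcons => pp lp; subst Y.
suff sub : supp X \subset zeros_along p :\: zeros X.
  rewrite ltnS (leq_trans (subset_leq_card sub)) // zeros_along_card //.
  by move: pp; rewrite rcons_path => /andP[].
apply/subsetP => e; rewrite !inE => Xe; rewrite Xe /=.
apply: contraT => noZ.
have nonzero : all (fun V => V e != None) (rcons p (negsv X)).
  rewrite all_rcons negsvE; apply/andP; split; first by case: (X e) Xe.
  by apply/allP => V Vp; apply: contra noZ => VZ; apply/hasP; exists V.
have := path_keeps_sign pp Xe nonzero; rewrite last_rcons => sameSign.
by move: (flips e Xe); rewrite sameSign eqxx.
Qed.

End UniformWalks.

Section UniformRankThree.
Hypothesis omC : oriented_matroid C.
Hypothesis unifC : uniform C 3.

Lemma zeros_card X : X \in C -> #|zeros X| = 2.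
Proof. exact: unifC. Qed.

Lemma negsv_in X : X \in C -> negsv X \in C.
Proof. by case: omC => _ negC _ _; apply: negC. Qed.

Lemma cocircuit_elim X Y e : X \in C -> Y \in C -> X <> negsv Y ->
  e \in sep X Y -> exists2 Z, Z \in C &
  forall g, Z g = None \/ (g != e /\ (Z g = X g \/ Z g = Y g)).
Proof.
case: omC => _ _ _ elim XC YC nXY eS.
have [Z ZC [posZ negZ]] := elim X Y e XC YC nXY eS.
exists Z => // g; case Zg: (Z g) => [[]|]; [right..|by left].
- have : g \in pos Z by rewrite inE Zg.
  by move/(subsetP posZ); rewrite !inE => /andP[-> /orP[] /eqP ->]; auto.
- have : g \in neg Z by rewrite inE Zg.
  by move/(subsetP negZ); rewrite !inE => /andP[-> /orP[] /eqP ->]; auto.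
Qed.

Lemma elim_splits_sep X W e : X \in C -> W \in C -> X <> negsv W ->
  e \in sep X W -> exists2 Z, Z \in C &
  [/\ forall g, X g = None -> W g = None -> Z g = None, Z e = None
    & #|sep X Z| + #|sep Z W| < #|sep X W|].
Proof.
move=> XC WC nXW eS; have [Z ZC HZ] := cocircuit_elim XC WC nXW eS.
exists Z => //; split.
- by move=> g Xg Wg; case: (HZ g) => [|[_ [->|->]]].
- by case: (HZ e) => [//|[]]; rewrite eqxx.
have sepXZ : sep X Z \subset sep X W :\ e.
  apply/subsetP => g; rewrite in_setD1 !sepP => /and3P[Xg Zg XZ].
  case: (HZ g) => [Zg0|[ge [ZX|ZW]]]; first by rewrite Zg0 in Zg.
  - by rewrite ZX eqxx in XZ.
  - by rewrite ge Xg -ZW Zg XZ.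
have sepZW : sep Z W \subset sep X W :\ e.
  apply/subsetP => g; rewrite in_setD1 !sepP => /and3P[Zg Wg ZW].
  case: (HZ g) => [Zg0|[ge [ZX|ZW']]]; first by rewrite Zg0 in Zg.
  - by rewrite ge -ZX Zg Wg ZW.
  - by rewrite ZW' eqxx in ZW.
have disj : sep X Z :&: sep Z W = set0.
  apply/setP => g; rewrite in_setI in_set0 !sepP.
  apply/negP => /andP[/and3P[_ Zg XZ] /and3P[_ _ ZW]].
  case: (HZ g) => [Zg0|[_ [ZX|ZW']]]; first by rewrite Zg0 in Zg.
  - by rewrite ZX eqxx in XZ.
  - by rewrite ZW' eqxx in ZW.
have := cardsUI (sep X Z) (sep Z W); rewrite disj cards0 addn0 => <-.
rewrite (cardsD1 e (sep X W)) eS.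
by rewrite add1n ltnS; apply: subset_leq_card; rewrite subUset sepXZ sepZW.
Qed.

(* Cocircuits with distinct zero sets share at most one of their two
   zeros, so their zero sets cover at least three elements. *)
Lemma common_supp_card X Y : X \in C -> Y \in C -> zeros X != zeros Y ->
  #|common_supp X Y| + 3 <= #|E|.
Proof.
move=> XC YC neq.
have meet : #|zeros X :&: zeros Y| <= 1.
  rewrite leqNgt; apply: contra neq => big.
  have eX : zeros X :&: zeros Y = zeros X.
    by apply/eqP; rewrite eqEcard subsetIl zeros_card.
  have eY : zeros X :&: zeros Y = zeros Y.
    by apply/eqP; rewrite eqEcard subsetIr zeros_card.
  by rewrite -eX eY.
have := cardsUI (zeros X) (zeros Y); have := cardsC (zeros X :|: zeros Y).
by rewrite common_suppE !zeros_card //; lia.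
Qed.

Lemma walk_adjacent X W a : X \in C -> W \in C -> X != W ->
  X a = None -> W a = None -> sep X W = set0 -> walk C 3 X W 1.
Proof.
move=> XC WC neq Xa Wa sep0; exists [:: W]; split => //=.
rewrite andbT /cocirc_adj XC WC neq sep0 eqxx andbT /=.
by apply/card_gt0P; exists a; rewrite !inE Xa Wa.
Qed.

(* Cocircuits on a common "line" (sharing the zero a) are joined by a walk
   on that line of length at most #|sep X W| + 1: eliminate a separating
   element and recurse on both halves. *)
Lemma walk_on_line X W a : X \in C -> W \in C -> X a = None -> W a = None ->
  zeros X != zeros W -> exists2 m, m <= #|sep X W| + 1 & walk C 3 X W m.
Proof.
have [n] := ubnP #|sep X W|; elim: n X W => // n IH X W sepn XC WC Xa Wa neq.
have [XW nXW] := zeros_neq_sv neq.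
have [sep0|/set0Pn [e eS]] := eqVneq (sep X W) set0.
  by exists 1; [rewrite addn1 | exact: walk_adjacent XC WC XW Xa Wa sep0].
have [Z ZC [Zcommon Ze split]] := elim_splits_sep XC WC nXW eS.
move: (eS); rewrite sepP => /and3P[Xe We _].
have neqXZ : zeros X != zeros Z.
  by apply/eqP => /setP/(_ e); rewrite !inE Ze eqxx (negbTE Xe).
have neqZW : zeros Z != zeros W.
  by apply/eqP => /setP/(_ e); rewrite !inE Ze eqxx (negbTE We).
have [|m1 le1 w1] := IH X Z _ XC ZC Xa (Zcommon a Xa Wa) neqXZ.
  by clear -split sepn; lia.
have [|m2 le2 w2] := IH Z W _ ZC WC (Zcommon a Xa Wa) Wa neqZW.
  by clear -split sepn; lia.
exists (m1 + m2); last exact: walk_cat w1 w2.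
by clear -split le1 le2; lia.
Qed.

(* Joining X to Y through a pivot V: along the line of V through a zero of X,
   then along the line of V through a zero of Y.  Of the pivots V and -V one
   is separated from X and Y by at most #|E| - 3 elements in total, since on
   each common support V and -V split the separating elements between them. *)
Lemma walk_via_pivot X Y V a d : X \in C -> Y \in C -> V \in C ->
  X a = None -> V a = None -> V d = None -> Y d = None ->
  zeros X != zeros V -> zeros V != zeros Y ->
  exists2 k, k <= #|E| - 1 & walk C 3 X Y k.
Proof.
move=> XC YC VC Xa Va Vd Yd neqXV neqVY.
have through U : U \in C -> U a = None -> U d = None ->
    zeros X != zeros U -> zeros U != zeros Y ->
    exists2 k, k <= #|sep X U| + #|sep U Y| + 2 & walk C 3 X Y k.
  move=> UC Ua Ud neqXU neqUY.
  have [m1 le1 w1] := walk_on_line XC UC Xa Ua neqXU.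
  have [m2 le2 w2] := walk_on_line UC YC Ud Yd neqUY.
  by exists (m1 + m2); [clear -le1 le2; lia | exact: walk_cat w1 w2].
have [k1 le1 w1] := through V VC Va Vd neqXV neqVY.
have [k2 le2 w2] : exists2 k, k <= #|sep X (negsv V)| + #|sep (negsv V) Y| + 2
    & walk C 3 X Y k.
  by apply: through; rewrite ?negsv_in ?zeros_negsv ?negsvE ?Va ?Vd.
have splitX := sep_negsv_card X V; have splitY := sep_negsv_card Y V.
rewrite !(sep_sym Y) in splitY.
have boundX := common_supp_card XC VC neqXV.
have neqYV : zeros Y != zeros V by rewrite eq_sym.
have boundY := common_supp_card YC VC neqYV.
have [small|large] := leqP (#|sep X V| + #|sep V Y|) (#|E| - 3).
  by exists k1 => //; clear -le1 small boundX; lia.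
exists k2 => //; clear -le2 large splitX splitY boundX boundY; lia.
Qed.

Lemma zeros_pair X a b : X \in C -> X a = None -> X b = None -> a != b ->
  zeros X = [set a; b].
Proof.
move=> XC Xa Xb ab; apply/esym/eqP.
rewrite eqEcard cards2 ab zeros_card // andbT.
by apply/subsetP => g; rewrite !inE => /orP[]/eqP->; apply/eqP.
Qed.

Definition lines_through a :=
  forall c, c != a -> exists2 Z, Z \in C & Z a = None /\ Z c = None.

(* Two cocircuits through a with different zero sets generate all lines
   through a: for c where both are nonzero, eliminate c between X and the
   copy of +-Y that opposes X at c. *)
Lemma lines_through_of_two X Y a b : X \in C -> Y \in C ->
  X a = None -> Y a = None -> X b = None -> Y b != None -> lines_through a.
Proof.
move=> XC YC Xa Ya Xb Yb c ca.
case Xc: (X c) => [x|]; last by exists X.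
case Yc: (Y c) => [y|]; last by exists Y.
have [Y' [Y'C Y'a Y'b Y'c]] : exists Y', [/\ Y' \in C, Y' a = None,
    Y' b != None & Y' c = Some (~~ x)].
  have [xy|xy] := eqVneq x y.
  - exists (negsv Y); rewrite negsv_in // !negsvE Ya Yc xy.
    by split => //; case: (Y b) Yb.
  - by exists Y; split => //; rewrite Yc; case: x y xy {Xc Yc} => [] [].
have nXY' : X <> negsv Y'.
  by move=> XY'; move: Y'b Xb; rewrite XY' negsvE; case: (Y' b).
have cS : c \in sep X Y' by rewrite sepP Xc Y'c /=; case: x {Xc Y'c}.
have [Z ZC HZ] := cocircuit_elim XC Y'C nXY' cS.
exists Z => //; split; first by case: (HZ a) => [|[_ [->|->]]].
by case: (HZ c) => [//|[]]; rewrite eqxx.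
Qed.

(* Along the chain of covectors 0 < V1 < V2 < V3 the zero sets shrink
   strictly; as V1 lies below a cocircuit, V2 has exactly one zero a and V3
   none.  A cocircuit X of V2 vanishes at a and at some b, a cocircuit Y of
   V2 vanishes at a but not at b, and a cocircuit W of V3 is nonzero at a. *)
Lemma rank3_configuration : is_rank C 3 ->
  exists a b X Y W, [/\ X \in C, Y \in C, W \in C, [/\ X a = None, Y a = None,
    X b = None & Y b != None] & W a != None].
Proof.
case=> [[V [V0 covV ltV]] _].
have lt01 := sv_lt_zeros (ltV 0 isT); have lt12 := sv_lt_zeros (ltV 1 isT).
have lt23 := sv_lt_zeros (ltV 2 isT).
have zeros0 : #|zeros (V 0)| = #|E|.
  by rewrite V0 -cardsT; apply: eq_card => e; rewrite !inE ffunE.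
have [e1 V1e1] := nonzero_entry (leq_trans lt01 (eq_leq zeros0)).
have [X1 X1C [_ subX1]] := covector_nonzero (covV 1 isT) V1e1.
have le1 := subset_leq_card subX1; rewrite (zeros_card X1C) in le1.
have [e2 V2e2] : exists e, V 2 e != None.
  by apply: nonzero_entry; rewrite -zeros0; apply: ltn_trans lt12 lt01.
have [X X_C [_ subX]] := covector_nonzero (covV 2 isT) V2e2.
have small2 : #|zeros (V 2)| < 2 := leq_trans lt12 le1.
have empty3 : zeros (V 3) = set0.
  by apply/eqP; rewrite -cards_eq0 -leqn0 -ltnS (leq_trans lt23 small2).
have [a aV2] : exists a, a \in zeros (V 2).
  by apply/card_gt0P; apply: leq_ltn_trans lt23.
have Xa : X a = None by apply/eqP; move/subsetP: subX => /(_ a aV2); rewrite inE.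
have [b] : exists b, b \in zeros X :\ a.
  apply/card_gt0P; have := cardsD1 a (zeros X).
  by rewrite zeros_card // inE Xa eqxx add1n => -[<-].
rewrite in_setD1 inE => /andP[ba /eqP Xb].
have V2b : V 2 b != None.
  apply: contraT; rewrite negbK => V2b.
  have : [set a; b] \subset zeros (V 2).
    by apply/subsetP => g; rewrite in_set2 => /orP[]/eqP->; rewrite // inE.
  by move/subset_leq_card; rewrite cards2 eq_sym ba leqNgt small2.
have [Y YC [Yb subY]] := covector_nonzero (covV 2 isT) V2b.
have V3a : V 3 a != None.
  apply: contraT; rewrite negbK => V3a.
  have : a \in zeros (V 3) by rewrite inE.
  by rewrite empty3 inE.
have [W WC [Wa _]] := covector_nonzero (covV 3 isT) V3a.
exists a, b, X, Y, W; split => //; split => //.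
by apply/eqP; move/subsetP: subY => /(_ a aV2); rewrite inE.
Qed.

(* In rank 3 every pair of elements is the zero set of a cocircuit: the
   configuration above gives all lines through a', two cocircuits through a
   zero p of W then give all lines through p, and for any third element a
   the lines {a', a} and {p, a} give all lines through a. *)
Lemma lines_through_all : is_rank C 3 -> forall a, lines_through a.
Proof.
move=> rk; have [a' [b [X [Y [W [XC YC WC [Xa' Ya' Xb Yb] Wa']]]]]] :=
  rank3_configuration rk.
have lines_a' := lines_through_of_two XC YC Xa' Ya' Xb Yb.
have [p] : exists p, p \in zeros W by apply/card_gt0P; rewrite zeros_card.
rewrite inE => /eqP Wp.
have pa' : p != a' by apply: contraNneq Wa' => <-; rewrite Wp.
have [Z ZC [Za' Zp]] := lines_a' p pa'.
have lines_p := lines_through_of_two ZC WC Zp Wp Za' Wa'.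
move=> a; have [->|aa'] := eqVneq a a'; first exact: lines_a'.
have [->|ap] := eqVneq a p; first exact: lines_p.
have [X' X'C [X'a' X'a]] := lines_a' a aa'.
have [Y' Y'C [Y'p Y'a]] := lines_p a ap.
apply: (lines_through_of_two X'C Y'C X'a Y'a X'a'); apply/negP => /eqP Y'a'.
have : a' \in zeros Y' by rewrite inE Y'a'.
rewrite (zeros_pair Y'C Y'p Y'a); last by rewrite eq_sym.
by rewrite in_set2 !(eq_sym a') (negbTE pa') (negbTE aa').
Qed.

(* Upper bound: cocircuits with a common zero and different zero sets lie
   on a line; otherwise they are joined through a pivot cocircuit whose
   zeros are a zero of X and an element outside the zeros of X (a zero of Y
   when X and Y share none). *)
Lemma cocircuit_distance_le X Y : 3 <= #|E| -> (forall a, lines_through a) ->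
  X \in C -> Y \in C -> exists2 k, k <= #|E| - 1 & walk C 3 X Y k.
Proof.
move=> largeE lines XC YC.
have pivot a c : X a = None -> X c != None ->
    exists2 V, V \in C & [/\ V a = None, V c = None & zeros X != zeros V].
  move=> Xa Xc; have [|V VC [Va Vc]] := lines a c.
    by apply: contraNneq Xc => ->; rewrite Xa.
  by exists V => //; split => //; apply/eqP => /setP/(_ c); rewrite !inE Vc (negbTE Xc).
have [a aX] : exists a, a \in zeros X by apply/card_gt0P; rewrite zeros_card.
move: aX; rewrite inE => /eqP Xa.
have [a' /andP[/eqP Xa' /eqP Ya'] | noCommon] :=
  pickP [pred g | (X g == None) && (Y g == None)]; last first.
  have [c cY] : exists c, c \in zeros Y by apply/card_gt0P; rewrite zeros_card.
  move: cY; rewrite inE => /eqP Yc.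
  have Xc : X c != None.
    by apply/negP => /eqP Xc; have := noCommon c; rewrite /= Xc Yc.
  have [V VC [Va Vc neqXV]] := pivot a c Xa Xc.
  apply: (walk_via_pivot XC YC VC Xa Va Vc Yc neqXV).
  apply/eqP => /setP/(_ a); rewrite !inE Va eqxx => /esym/eqP Ya.
  by have := noCommon a; rewrite /= Xa Ya.
have [eqXY|neqXY] := eqVneq (zeros X) (zeros Y).
  have [c Xc] : exists c, X c != None.
    by apply: nonzero_entry; rewrite zeros_card //; lia.
  have [V VC [Va' Vc neqXV]] := pivot a' c Xa' Xc.
  apply: (walk_via_pivot XC YC VC Xa' Va' Va' Ya' neqXV).
  by apply/eqP => /setP/(_ c); rewrite -eqXY !inE Vc (negbTE Xc).
have [m le_m w] := walk_on_line XC YC Xa' Ya' neqXY; exists m => //.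
have := subset_leq_card (sep_common_supp X Y).
by have := common_supp_card XC YC neqXY; clear -le_m; lia.
Qed.

End UniformRankThree.

End CocircuitGraphs.

Theorem theorem4p2 (E : finType) (C : {set {ffun E -> option bool}}) :
  3 <= #|E| ->
  oriented_matroid C -> is_rank C 3 -> uniform C 3 ->
  cocirc_diam C 3 (#|E| - 1).
Proof.
move=> largeE omC rk unifC.
have lines := lines_through_all omC unifC rk.
split=> [X Y XC YC|]; first exact: (cocircuit_distance_le omC unifC largeE lines XC YC).
have [_ [_ [X [_ [_ [XC _ _ _ _]]]]]] := rank3_configuration unifC rk.
exists X, (negsv X); split; rewrite ?(negsv_in omC) // => k lt_k walkX.
have suppX : #|supp X| = #|E| - 2 by rewrite supp_card (zeros_card unifC).
have := antipodal_walk_length unifC _ walkX; rewrite suppX.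
by clear -largeE lt_k; lia.
Qed.
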